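(* Let $T_r$ be a resistive dyadic tree with resistances $(r_n^k)$ and let $s>0$ be such that $$\sum_{n\geq 1}\frac{\max_{0\le k\le 2^n-1} r_n^k}{2^{n(1-2s)}}<+\infty .$$ Then (this condition implies $\sum_{n\ge1}2^{-n}\max_k r_n^k<\infty$, so that for every $p\in H^1(T_r)$ the sequence $\tilde p_n$ converges in $L^2(\mathbb{Z}_2)$ to a limit $\gamma_0(p)$) the trace operator $\gamma_0$ maps $H^1(T_r)$ continuously into $H^s(\mathbb{Z}_2)$: $\gamma_0(p)\in H^s(\mathbb{Z}_2)$ for all $p\in H^1(T_r)$ and $\|\gamma_0(p)\|_{H^s(\mathbb{Z}_2)}\le C\|p\|_{H^1(T_r)}$ with $C$ independent of $p$.
   Context: The infinite dyadic tree $T$ has vertex set $V$ equal to the disjoint union over $n\ge 0$ of the sets $\mathbb{Z}/2^n\mathbb{Z}$; $x_n^k$ denotes $k\in\mathbb{Z}/2^n\mathbb{Z}$, and $x_0^0$ is the root. For $n<m$, $\varphi_n^m:\mathbb{Z}/2^m\mathbb{Z}\to\mathbb{Z}/2^n\mathbb{Z}$ is the canonical surjection. For $n\ge1$ the edge $e_n^k$ joins $x_n^k$ to $\varphi_{n-1}^n(x_n^k)$. A resistive dyadic tree $T_r$ is $T$ with positive resistances $r_n^k$ on $e_n^k$ ($n\ge1$, $0\le k\le2^n-1$). $|p|_{H^1}^2=\sum_{n\ge1}\sum_k |p(x_n^k)-p(\varphi_{n-1}^n(x_n^k))|^2/r_n^k$, $H^1(T_r)=\{p:V\to\mathbb{R}:|p|_{H^1}<\infty\}$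 with norm $\|p\|_{H^1(T_r)}^2=|p(x_0^0)|^2+|p|_{H^1}^2$. $\mathbb{Z}_2$: 2-adic integers, $|\cdot|_2$ the 2-adic absolute value, $\mu$ the Haar probability measure on $\mathbb{Z}_2$. For $n\ge0$, $\tilde p_n(x)=p(x_n^a)$ where $a\in\{0,\dots,2^n-1\}$, $x\in a+2^n\mathbb{Z}_2$. Sobolev spaces: $\Lambda=\mathbb{Q}_2/\mathbb{Z}_2$ (identified with $\mathbb{Z}[1/2]\cap[0,1)$); for $f\in L^2(\mathbb{Z}_2)$ and $\lambda\in\Lambda$, $\mathcal F(f)(\lambda)=\int_{\mathbb{Z}_2}e^{-2i\pi\lambda x}f(x)\,d\mu(x)$; $H^s(\mathbb{Z}_2)$ is the completion of the space of locally constant functions on $\mathbb{Z}_2$ for the norm $\|f\|_{H^s(\mathbb{Z}_2)}=\big(\sum_{\lambda\in\Lambda}(1+|\lambda|_2)^{2s}|\mathcal F(f)(\lambda)|^2\big)^{1/2}$. *)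

From HB Require Import structures.
From mathcomp Require Import all_boot all_order all_algebra.
From mathcomp Require Import all_classical all_reals all_analysis.
Set Implicit Arguments. Unset Strict Implicit. Unset Printing Implicit Defensive.
Import Order.TTheory GRing.Theory Num.Theory numFieldTopology.Exports numFieldNormedType.Exports.
Local Open Scope ring_scope.

Section Dyadic.
Variable R : realType.

(* A vertex x_n^k of the dyadic tree is the pair (n, k) with k < 2^n.
   Resistances r : nat -> nat -> R (r n k on the edge e_n^k, n >= 1) and
   potentials p : nat -> nat -> R (p n k = p(x_n^k)); values at k >= 2^n
   are irrelevant and never used.  The parent of x_n^k is
   x_{n-1}^{k mod 2^(n-1)} (canonical surjection Z/2^n -> Z/2^(n-1)). *)

Definition edge_energy (r p : nat -> nat -> R) (n : nat) : R :=
  \sum_(k < 2 ^ n) (p n k - p n.-1 (k %% 2 ^ n.-1)%N) ^+ 2 / r n k.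

Definition H1semi2 (r p : nat -> nat -> R) : \bar R :=
  (\sum_(1 <= n <oo) (edge_energy r p n)%:E)%E.

Definition H1norm2 (r p : nat -> nat -> R) : \bar R :=
  ((p 0%N 0%N ^+ 2)%:E + H1semi2 r p)%E.

Definition maxres (r : nat -> nat -> R) (n : nat) : R :=
  \big[Num.max/0]_(k < 2 ^ n) r n k.

(* Integral w.r.t. the Haar probability measure mu on Z_2 of a function
   constant on each coset b + 2^L Z_2 (b < 2^L), with value h b there:
   each such coset has measure 2^-L. *)
Definition step_integral (L : nat) (h : nat -> R) : R :=
  ((2 ^ L)%:R)^-1 * \sum_(b < 2 ^ L) h b.

(* \tilde p_n is the locally constant function with value p n a on a + 2^n Z_2.
   Squared L^2(Z_2)-distance between \tilde p_n and \tilde p_m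
   (both constant on cosets of 2^(max n m) Z_2). *)
Definition L2dist2 (p : nat -> nat -> R) (n m : nat) : R :=
  step_integral (maxn n m)
    (fun b => (p n (b %% 2 ^ n)%N - p m (b %% 2 ^ m)%N) ^+ 2).

(* (\tilde p_n) is a Cauchy (hence convergent, L^2 being complete) sequence in L^2(Z_2). *)
Definition L2_cauchy (p : nat -> nat -> R) : Prop :=
  forall e : R, 0 < e -> exists N : nat, forall n m : nat,
    (N <= n)%N -> (N <= m)%N -> L2dist2 p n m < e.

(* Lambda = Q_2/Z_2 = Z[1/2] /\ [0,1): each lambda is uniquely j / 2^m with
   (m, j) = (0, 0) (lambda = 0) or m >= 1, j odd, j < 2^m. *)
Definition lam_index (m j : nat) : bool :=
  ((m == 0%N) && (j == 0%N)) || [&& (0 < m)%N, odd j & (j < 2 ^ m)%N].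

Definition lam_val (m j : nat) : R := j%:R / (2 ^ m)%:R.

(* 2-adic absolute value of lambda = j/2^m in canonical form. *)
Definition lam_abs2 (m : nat) : R := if m == 0%N then 0 else (2 ^ m)%:R.

(* Real and imaginary parts of F(g)(lambda) = \int e^{-2 i pi lambda x} g(x) dmu(x)
   for g locally constant at level n (value g a on a + 2^n Z_2), lambda = j/2^m.
   The integrand is constant on cosets b + 2^(max n m) Z_2, with value
   g (b mod 2^n) * e^{-2 i pi j b / 2^m}. *)
Definition fourier_re (n : nat) (g : nat -> R) (m j : nat) : R :=
  step_integral (maxn n m)
    (fun b => g (b %% 2 ^ n)%N * cos (2 * pi * lam_val m j * b%:R)).

Definition fourier_im (n : nat) (g : nat -> R) (m j : nat) : R :=
  step_integral (maxn n m)
    (fun b => - (g (b %% 2 ^ n)%N * sin (2 * pi * lam_val m j * b%:R))).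

(* Fourier coefficients of gamma_0(p) = L^2-lim \tilde p_n (the Fourier transform
   is L^2-continuous, so F(gamma_0 p)(lambda) = lim_n F(\tilde p_n)(lambda)). *)
Definition gamma0_re (p : nat -> nat -> R) (m j : nat) : R :=
  limn (fun n => fourier_re n (p n) m j).

Definition gamma0_im (p : nat -> nat -> R) (m j : nat) : R :=
  limn (fun n => fourier_im n (p n) m j).

(* ||f||_{H^s(Z_2)}^2 = sum_{lambda in Lambda} (1 + |lambda|_2)^{2s} |F f(lambda)|^2,
   for f given by its Fourier coefficients (fre, fim). *)
Definition Hs_norm2 (s : R) (fre fim : nat -> nat -> R) : \bar R :=
  (\sum_(0 <= m <oo)
     (\sum_(j < 2 ^ m | lam_index m j)
        (1 + lam_abs2 m) `^ (2 * s) * (fre m j ^+ 2 + fim m j ^+ 2))%:E)%E.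

End Dyadic.

From HB Require Import structures.
From mathcomp Require Import all_boot all_order all_algebra.
From mathcomp Require Import all_classical all_reals all_analysis.
From mathcomp Require Import ring lra zify.
Import Order.TTheory GRing.Theory Num.Theory numFieldTopology.Exports numFieldNormedType.Exports.
Set Implicit Arguments. Unset Strict Implicit.
Local Open Scope ring_scope.

(* Write \tilde p_n as the telescoping sum of the increments
   q_i = \tilde p_i - \tilde p_(i-1).  Since q_i is constant on the cosets of
   2^i Z_2, Parseval shows that its Fourier transform lives on the frequencies
   with |lambda|_2 <= 2^i, where the H^s weight is at most (1 + 2^i)^(2s), and
   ||q_i||^2 <= 2^-i (max_k r_i^k) E_i with E_i the energy of the edges of
   level i.  Cauchy-Schwarz with the weights
   c_i = (1 + 2^i)^(2s) 2^-i max_k r_i^k then bounds both the H^s norm of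
   \tilde p_n and the L^2 distance from \tilde p_n to \tilde p_(n+d) by
   (sum_i c_i)(sum_i E_i), the sums running over the relevant levels.  The
   hypothesis makes sum_i c_i finite, which yields the Cauchy property, the
   convergence of every Fourier coefficient, and the bound on the limit. *)

Section StepIntegral.
Variable R : realType.
Implicit Types (f g : nat -> R).

Definition dyadic_periodic (K : nat) f := forall b, f (b %% 2 ^ K)%N = f b.

Lemma dyadic_periodicW K K' f :
  (K <= K')%N -> dyadic_periodic K f -> dyadic_periodic K' f.
Proof.
move=> KK' fP b; rewrite -fP -[RHS]fP; congr f.
by rewrite modn_dvdm // dvdn_exp2l.
Qed.

Lemma sum_dyadic_periodic K c f : dyadic_periodic K f ->
  \sum_(b < 2 ^ K * c) f b = c%:R * \sum_(b < 2 ^ K) f b.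
Proof.
move=> fP; elim: c => [|c IH]; first by rewrite muln0 big_ord0 mul0r.
rewrite mulnS addnC -[LHS](big_mkord xpredT).
rewrite (big_cat_nat _ (n := (2 ^ K * c)%N)) ?leq_addr //= big_mkord IH.
rewrite -{1}(add0n (2 ^ K * c)%N) big_addn addKn big_mkord.
have -> : \sum_(i < 2 ^ K) f (i + 2 ^ K * c)%N = \sum_(i < 2 ^ K) f i.
  apply: eq_bigr => i _; rewrite -fP -[in RHS]fP; congr f.
  by rewrite addnC mulnC modnMDl.
by rewrite mulrSr mulrDl mul1r.
Qed.

Lemma step_integral_periodic K L f : (K <= L)%N -> dyadic_periodic K f ->
  step_integral L f = step_integral K f.
Proof.
move=> KL fP; rewrite /step_integral -(subnKC KL) expnD sum_dyadic_periodic //.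
rewrite natrM invfM -mulrA; congr (_ * _).
by rewrite mulrA mulVf ?mul1r // pnatr_eq0 expn_eq0.
Qed.

Lemma step_integralD L f g :
  step_integral L (fun b => f b + g b) = step_integral L f + step_integral L g.
Proof. by rewrite /step_integral big_split mulrDr. Qed.

Lemma step_integralZ L a f :
  step_integral L (fun b => a * f b) = a * step_integral L f.
Proof. by rewrite /step_integral -mulr_sumr mulrCA. Qed.

Lemma step_integralN L f :
  step_integral L (fun b => - f b) = - step_integral L f.
Proof. by rewrite /step_integral sumrN mulrN. Qed.

Lemma step_integral_sum L n (F : nat -> nat -> R) :
  step_integral L (fun b => \sum_(i < n) F i b) =
  \sum_(i < n) step_integral L (F i).
Proof. by rewrite /step_integral exchange_big mulr_sumr. Qed.

Lemma ler_step_integral L f g : (forall b, f b <= g b) ->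
  step_integral L f <= step_integral L g.
Proof.
move=> fg; rewrite /step_integral ler_wpM2l ?invr_ge0 ?ler0n //.
exact: ler_sum.
Qed.

End StepIntegral.

Section DiscreteFourier.
Variable R : realType.
Implicit Types h : nat -> R.

Lemma cosD2pin (x : R) n : cos (x + (pi *+ 2) *+ n) = cos x.
Proof. exact: (periodicn (@cosD2pi R)). Qed.

Lemma sinD2pin (x : R) n : sin (x + (pi *+ 2) *+ n) = sin x.
Proof. exact: (periodicn (@sinD2pi R)). Qed.

Lemma sum_cos_eq0 (N t : nat) : (0 < t)%N -> (t < N)%N ->
  \sum_(j < N) cos (2 * pi * (j%:R / N%:R) * t%:R) = 0 :> R.
Proof.
move=> t0 tN.
have NR : (N%:R : R) != 0 by rewrite pnatr_eq0 -lt0n (leq_trans _ tN).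
set a : R := pi * t%:R / N%:R.
have a0 : 0 < a by rewrite divr_gt0 ?mulr_gt0 ?pi_gt0 ?ltr0n // (leq_trans _ tN).
have api : a < pi.
  by rewrite /a -mulrA gtr_pMr ?pi_gt0 // ltr_pdivrMr ?mul1r ?ltr_nat ?ltr0n
    // (leq_trans _ tN).
have sa : 0 < sin a by apply: sin_gt0_pi; apply/andP.
pose u (j : nat) := sin ((j%:R *+ 2 - 1) * a).
(* Telescoping: 2 sin(a) cos(2ja) = sin((2j+1)a) - sin((2j-1)a). *)
have telescope j :
    cos (2 * pi * (j%:R / N%:R) * t%:R) * (sin a *+ 2) = u j.+1 - u j.
  have -> : 2 * pi * (j%:R / N%:R) * t%:R = j%:R *+ 2 * a by rewrite /a; field.
  rewrite /u; have -> : ((j.+1)%:R *+ 2 - 1) * a = j%:R *+ 2 * a + a by rewrite -natr1; ring.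
  have -> : (j%:R *+ 2 - 1) * a = j%:R *+ 2 * a - a by ring.
  by rewrite sinD sinB; ring.
have : (\sum_(j < N) cos (2 * pi * (j%:R / N%:R) * t%:R)) * (sin a *+ 2) = 0.
  rewrite mulr_suml (eq_bigr _ (fun (j : 'I_N) _ => telescope j)).
  rewrite -(big_mkord xpredT (fun j => u j.+1 - u j)) telescope_sumr // /u.
  have -> : (N%:R *+ 2 - 1) * a = - a + (pi *+ 2) *+ t.
    by rewrite /a -mulr_natr -[pi *+ 2]mulr_natr -mulr_natr; field.
  by rewrite sinD2pin mul0rn sub0r mulN1r subrr.
by move/eqP; rewrite mulf_eq0 mulrn_eq0 /= (gt_eqF sa) orbF => /eqP.
Qed.

Lemma sum_cos_orthogonal (N b b' : nat) : (b < N)%N -> (b' < N)%N ->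
  \sum_(j < N) cos (2 * pi * (j%:R / N%:R) * b%:R - 2 * pi * (j%:R / N%:R) * b'%:R)
  = (b == b')%:R * N%:R :> R.
Proof.
move=> bN b'N; case: (ltngtP b b') => [lt|lt|<-].
- rewrite (eq_bigr (fun j : 'I_N => cos (2 * pi * (j%:R / N%:R) * (b' - b)%:R))).
    by rewrite sum_cos_eq0 ?(ltn_eqF lt) ?mul0r //; lia.
  by move=> j _; rewrite -cosN natrB ?(ltnW lt) //; congr cos; ring.
- rewrite (eq_bigr (fun j : 'I_N => cos (2 * pi * (j%:R / N%:R) * (b - b')%:R))).
    by rewrite sum_cos_eq0 ?(gtn_eqF lt) ?mul0r //; lia.
  by move=> j _; rewrite natrB ?(ltnW lt) //; congr cos; ring.
- rewrite mul1r (eq_bigr (fun _ => 1)); last by move=> j _; rewrite subrr cos0.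
  by rewrite sumr_const card_ord.
Qed.

(* [fourier_re], [fourier_im] with the integration level [L] decoupled from
   the level of the step function [h]. *)
Definition fcoef_re L h m j :=
  step_integral L (fun b => h b * cos (2 * pi * lam_val R m j * b%:R)).
Definition fcoef_im L h m j :=
  step_integral L (fun b => - (h b * sin (2 * pi * lam_val R m j * b%:R))).

Lemma dft_parseval L h :
  \sum_(j < 2 ^ L) (fcoef_re L h L j ^+ 2 + fcoef_im L h L j ^+ 2) =
  step_integral L (fun b => h b ^+ 2).
Proof.
set N := (2 ^ L)%N.
have NR : (N%:R : R) != 0 by rewrite pnatr_eq0 expn_eq0.
have expand j : fcoef_re L h L j ^+ 2 + fcoef_im L h L j ^+ 2 =
    N%:R^-1 ^+ 2 * \sum_(b < N) \sum_(b' < N) h b * h b' *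
      cos (2 * pi * (j%:R / N%:R) * b%:R - 2 * pi * (j%:R / N%:R) * b'%:R).
  rewrite /fcoef_re /fcoef_im /step_integral /lam_val -/N sumrN mulrN sqrrN.
  rewrite !exprMn -mulrDr; congr (_ * _).
  rewrite !expr2 !big_distrlr /= -big_split /=; apply: eq_bigr => b _.
  rewrite -big_split /=; apply: eq_bigr => b' _.
  by rewrite cosB; ring.
rewrite (eq_bigr _ (fun (j : 'I_N) _ => expand j)) -mulr_sumr exchange_big /=.
rewrite (eq_bigr (fun b : 'I_N => h b ^+ 2 * N%:R)); last first.
  move=> b _; rewrite exchange_big /=.
  rewrite (eq_bigr (fun b' : 'I_N => h b * h b' * ((b == b')%:R * N%:R))); last first.
    by move=> b' _; rewrite -mulr_sumr sum_cos_orthogonal.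
  rewrite (bigD1 b) //= eqxx big1 ?addr0; first by rewrite mul1r expr2.
  by move=> b' /negbTE; rewrite eq_sym => ->; rewrite mul0r mulr0.
by rewrite /step_integral -/N -mulr_suml; field.
Qed.

Lemma big_ord_double_odd N (F : nat -> R) :
  \sum_(j < N.*2 | odd j) F j = \sum_(i < N) F i.*2.+1.
Proof.
elim: N => [|N IH]; first by rewrite !big_ord0.
rewrite big_mkcond /= doubleS !big_ord_recr /= -big_mkcond /= IH.
by rewrite odd_double /= addr0.
Qed.

Lemma big_ord_double N (F : nat -> R) :
  \sum_(j < N.*2) F j = \sum_(i < N) (F i.*2 + F i.*2.+1).
Proof.
elim: N => [|N IH]; first by rewrite !big_ord0.
by rewrite doubleS !big_ord_recr /= IH addrA.
Qed.

(* Every [j < 2^L] is uniquely [j' * 2^(L-m)] with [j'/2^m] in lowest terms. *)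
Lemma sum_lam_index L (F : nat -> R) :
  \sum_(m < L.+1) \sum_(j < 2 ^ m | lam_index m j) F (j * 2 ^ (L - m))%N
  = \sum_(j < 2 ^ L) F j.
Proof.
elim: L F => [|L IH] F; first by rewrite big_ord1 big_mkcond !big_ord1 muln1.
rewrite big_ord_recr /=.
rewrite (eq_bigr (fun m : 'I_L.+1 => \sum_(j < 2 ^ m | lam_index m j)
    (fun i => F i.*2) (j * 2 ^ (L - m))%N)); last first.
  move=> m _; apply: eq_bigr => j _; congr F.
  by rewrite subSn 1?expnS 1?mulnCA ?mul2n // -ltnS.
rewrite (IH (fun i => F i.*2)) subnn expn0.
rewrite (eq_bigl (fun j : 'I_(2 ^ L.+1) => odd j)); last first.
  by move=> j; rewrite /lam_index /= ltn_ord andbT.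
rewrite (eq_bigr (fun j : 'I_(2 ^ L.+1) => F j)); last by move=> j _; rewrite muln1.
by rewrite expnS mul2n big_ord_double_odd big_ord_double -big_split.
Qed.

Lemma lam_val_scale L m j : (m <= L)%N ->
  lam_val R m j = lam_val R L (j * 2 ^ (L - m))%N.
Proof.
move=> mL; rewrite /lam_val -{2}(subnK mL) expnD !natrM.
have h1 : ((2 ^ m)%:R : R) != 0 by rewrite pnatr_eq0 expn_eq0.
have h2 : ((2 ^ (L - m))%:R : R) != 0 by rewrite pnatr_eq0 expn_eq0.
by field; rewrite h1 h2.
Qed.

Lemma fcoef_parseval L h :
  \sum_(m < L.+1) \sum_(j < 2 ^ m | lam_index m j)
    (fcoef_re L h m j ^+ 2 + fcoef_im L h m j ^+ 2)
  = step_integral L (fun b => h b ^+ 2).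
Proof.
rewrite -dft_parseval -(sum_lam_index L (fun j =>
  fcoef_re L h L j ^+ 2 + fcoef_im L h L j ^+ 2)).
apply: eq_bigr => m _; apply: eq_bigr => j _.
by rewrite /fcoef_re /fcoef_im -lam_val_scale // -ltnS.
Qed.

Lemma fcoef_bessel L h m j : (m <= L)%N -> lam_index m j ->
  fcoef_re L h m j ^+ 2 + fcoef_im L h m j ^+ 2 <=
  step_integral L (fun b => h b ^+ 2).
Proof.
move=> mL lj; rewrite -fcoef_parseval.
have jm : (j < 2 ^ m)%N.
  by case/orP: lj => [/andP[/eqP -> /eqP ->] //|/and3P[_ _ ->]].
rewrite (bigD1 (Ordinal (mL : (m < L.+1)%N))) //= (bigD1 (Ordinal jm)) //=.
rewrite -addrA lerDl addr_ge0 ?sumr_ge0 // => i _.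
  by rewrite addr_ge0 ?sqr_ge0.
by rewrite sumr_ge0 // => i' _; rewrite addr_ge0 ?sqr_ge0.
Qed.

End DiscreteFourier.

Section PeriodicFourier.
Variable R : realType.
Implicit Types (h g : nat -> R).

Lemma lam_arg_modn m K j b : (m <= K)%N ->
  2 * pi * lam_val R m j * b%:R = 2 * pi * lam_val R m j * (b %% 2 ^ K)%:R
    + (pi *+ 2) *+ (j * 2 ^ (K - m) * (b %/ 2 ^ K))%N.
Proof.
move=> mK; have split2K : ((2 ^ K)%:R : R) = (2 ^ (K - m))%:R * (2 ^ m)%:R.
  by rewrite -natrM -expnD subnK.
have h1 : ((2 ^ m)%:R : R) != 0 by rewrite pnatr_eq0 expn_eq0.
rewrite {1}(divn_eq b (2 ^ K)) natrD natrM split2K /lam_val.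
rewrite -[_ *+ (j * _ * _)%N]mulr_natr -[pi *+ 2]mulr_natr !natrM.
by field.
Qed.

Lemma cos_lam_modn m K j b : (m <= K)%N ->
  cos (2 * pi * lam_val R m j * (b %% 2 ^ K)%:R) =
  cos (2 * pi * lam_val R m j * b%:R).
Proof. by move=> mK; rewrite (lam_arg_modn _ b mK) cosD2pin. Qed.

Lemma sin_lam_modn m K j b : (m <= K)%N ->
  sin (2 * pi * lam_val R m j * (b %% 2 ^ K)%:R) =
  sin (2 * pi * lam_val R m j * b%:R).
Proof. by move=> mK; rewrite (lam_arg_modn _ b mK) sinD2pin. Qed.

Lemma fcoef_periodic K L h m j : (m <= K)%N -> (K <= L)%N ->
  dyadic_periodic K h ->
  fcoef_re L h m j = fcoef_re K h m j /\ fcoef_im L h m j = fcoef_im K h m j.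
Proof.
move=> mK KL hP; split; apply: step_integral_periodic => // b.
  by rewrite hP cos_lam_modn.
by rewrite hP sin_lam_modn.
Qed.

Lemma sqr_add_eq0 (x y : R) : x ^+ 2 + y ^+ 2 = 0 -> x = 0 /\ y = 0.
Proof.
move/eqP; rewrite paddr_eq0 ?sqr_ge0 // !sqrf_eq0.
by move=> /andP[/eqP -> /eqP ->].
Qed.

(* Parseval at levels k and L has the same right-hand side. *)
Lemma fcoef_high_eq0 k L h m j : dyadic_periodic k h -> (k < m)%N -> (m <= L)%N ->
  lam_index m j -> fcoef_re L h m j = 0 /\ fcoef_im L h m j = 0.
Proof.
move=> hP km mL lj.
pose S m := \sum_(j < 2 ^ m | lam_index m j)
  (fcoef_re L h m j ^+ 2 + fcoef_im L h m j ^+ 2).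
have S0 m' : 0 <= S m' by apply: sumr_ge0 => i _; rewrite addr_ge0 ?sqr_ge0.
have kL : (k <= L)%N by apply: leq_trans (ltnW km) mL.
have low : \sum_(m' < k.+1) S m' = step_integral L (fun b => h b ^+ 2).
  rewrite (step_integral_periodic kL); last by move=> b; rewrite hP.
  rewrite -fcoef_parseval; apply: eq_bigr => m' _; apply: eq_bigr => j' _.
  by have [-> ->] := fcoef_periodic j' (ltnSE (ltn_ord m')) kL hP.
have : \sum_(k.+1 <= m' < L.+1) S m' = 0.
  apply: (@addrI _ (\sum_(0 <= m' < k.+1) S m')); rewrite addr0.
  rewrite -big_cat_nat //= !big_mkord low.
  by rewrite (fcoef_parseval L h).
have jm : (j < 2 ^ m)%N.
  by move: lj; rewrite /lam_index (gtn_eqF (leq_ltn_trans _ km)) // => /and3P[].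
move/eqP; rewrite psumr_eq0 // => /allP /(_ m).
rewrite mem_index_iota km ltnS mL => /(_ isT) /=.
rewrite /S psumr_eq0 => [/allP /(_ (Ordinal jm) (mem_index_enum _))|i _].
  by rewrite lj => /eqP /sqr_add_eq0.
by rewrite addr_ge0 ?sqr_ge0.
Qed.

Lemma fcoef_sum L n (F : nat -> nat -> R) m j :
  fcoef_re L (fun b => \sum_(i < n) F i b) m j = \sum_(i < n) fcoef_re L (F i) m j /\
  fcoef_im L (fun b => \sum_(i < n) F i b) m j = \sum_(i < n) fcoef_im L (F i) m j.
Proof.
split.
  rewrite /fcoef_re -(step_integral_sum L n
    (fun i b => F i b * cos (2 * pi * lam_val R m j * b%:R))).
  by congr step_integral; apply: funext => b; rewrite mulr_suml.
rewrite /fcoef_im -(step_integral_sum L n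
  (fun i b => - (F i b * sin (2 * pi * lam_val R m j * b%:R)))).
by congr step_integral; apply: funext => b; rewrite mulr_suml sumrN.
Qed.

Lemma fcoefB L h g m j :
  fcoef_re L (fun b => h b - g b) m j = fcoef_re L h m j - fcoef_re L g m j /\
  fcoef_im L (fun b => h b - g b) m j = fcoef_im L h m j - fcoef_im L g m j.
Proof.
rewrite /fcoef_re /fcoef_im -!step_integralN -!step_integralD.
by split; congr step_integral; apply: funext => b; ring.
Qed.

End PeriodicFourier.

Section RealSequences.
Variable R : realType.

Lemma weighted_cauchy_schwarz n (x c : nat -> R) : (forall i, 0 < c i) ->
  (\sum_(i < n) x i) ^+ 2 <= (\sum_(i < n) c i) * \sum_(i < n) x i ^+ 2 / c i.
Proof.
move=> c0; elim: n => [|n IH]; first by rewrite !big_ord0 expr0n mul0r.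
rewrite !big_ord_recr /=.
set S := \sum_(i < n) x i in IH *; set A := \sum_(i < n) c i in IH *.
set B := \sum_(i < n) x i ^+ 2 / c i in IH *.
have A0 : 0 <= A by apply: sumr_ge0 => i _; apply: ltW.
have B0 : 0 <= B by apply: sumr_ge0 => i _; rewrite divr_ge0 ?sqr_ge0 ?ltW.
have cn := c0 n; set y := x n / c n.
have -> : x n = c n * y by rewrite /y mulrCA divff ?mulr1 ?gt_eqF.
have -> : (c n * y) ^+ 2 / c n = c n * y ^+ 2 by field; rewrite gt_eqF.
suff cross : 2 * S * y <= A * y ^+ 2 + B by nra.
have [A0'|Ap] := eqVneq A 0.
  have -> : S = 0.
    by rewrite A0' mul0r in IH; apply/eqP; rewrite -sqrf_eq0 eq_le IH sqr_ge0.
  by rewrite A0'; nra.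
have Apos : 0 < A by rewrite lt_def Ap A0.
by rewrite -(ler_pM2l Apos); have := sqr_ge0 (A * y - S); nra.
Qed.

Lemma ler_sum_ord_mono (f : nat -> R) K K' : (forall m, 0 <= f m) ->
  (K <= K')%N -> \sum_(m < K) f m <= \sum_(m < K') f m.
Proof.
move=> f0 KK; rewrite -!(big_mkord xpredT f).
by rewrite [X in _ <= X](big_cat_nat _ KK) //= lerDl sumr_ge0.
Qed.

Lemma sum_ord_shift (F : nat -> R) a d :
  \sum_(k < d) F (k + a)%N = \sum_(i < a + d) F i - \sum_(i < a) F i.
Proof.
rewrite -!(big_mkord xpredT) (big_cat_nat _ (n := a)) ?leq_addr //= addrC addrK.
by rewrite (big_addn 0 (a + d) a) addKn big_mkord.
Qed.

Lemma sum_tail_lt (u : nat -> R) B : (forall i, 0 <= u i) ->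
  (forall N, \sum_(i < N) u i <= B) ->
  forall e, 0 < e -> exists N, forall a d, (N <= a)%N -> \sum_(k < d) u (k + a)%N < e.
Proof.
move=> u0 uB e e0.
pose S n := \sum_(i < n) u i.
have Sh : {homo S : n m / (n <= m)%N >-> n <= m} by move=> *; apply: ler_sum_ord_mono.
have Sc : cvgn S.
  by apply: nondecreasing_is_cvgn Sh _; exists B => _ [n _ <-]; apply: uB.
have Sl n : S n <= limn S := nondecreasing_cvgn_le Sh Sc n.
have [N _ HN] : (\forall n \near \oo, limn S - e / 2 <= S n)%classic.
  by apply: lt_lim Sh Sc _; rewrite gtrBl divr_gt0.
exists N => a d Na; rewrite sum_ord_shift.
have := HN a Na; have := Sl (a + d)%N; rewrite /S.
have : e / 2 < e by rewrite ltr_pdivrMr // ltr_pMr // ltr1n.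
lra.
Qed.

Lemma cvgn_cauchy (u : nat -> R) :
  (forall e, 0 < e -> exists N, forall n m, (N <= n)%N -> (N <= m)%N ->
     `|u n - u m| < e) -> cvgn u.
Proof.
move=> H; apply/cauchy_cvgP; apply: cauchy_exP => e e0.
have [N HN] := H e e0; exists (u N), N => // n /= Nn.
by rewrite /ball /= HN.
Qed.

Lemma nneseries_partial_le (a : nat -> R) : (forall n, (1 <= n)%N -> 0 <= a n) ->
  (\sum_(1 <= n <oo) (a n)%:E < +oo)%E ->
  forall N, \sum_(1 <= i < N) a i <= fine (\sum_(1 <= n <oo) (a n)%:E)%E.
Proof.
move=> a0 afin N.
have ge0 : (0 <= \sum_(1 <= n <oo) (a n)%:E)%E.
  by apply: nneseries_ge0 => n n1 _; rewrite lee_fin a0.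
have fn : (\sum_(1 <= n <oo) (a n)%:E)%E \is a fin_num by rewrite ge0_fin_numE.
have := nneseries_lim_ge (u_ := fun n => (a n)%:E) (P := xpredT) (m := 1%N) N.
rewrite sumEFin -(fineK fn) lee_fin; apply => n n1 _; by rewrite lee_fin a0.
Qed.

Lemma cvgn_weighted_sqr_sum (u v : nat -> R) (a b w : R) :
  (u n @[n --> \oo] --> a)%classic -> (v n @[n --> \oo] --> b)%classic ->
  ((w * (u n ^+ 2 + v n ^+ 2)) @[n --> \oo] --> w * (a ^+ 2 + b ^+ 2))%classic.
Proof.
move=> ua vb; apply: cvgM; first exact: cvg_cst.
by apply: cvgD; rewrite expr2; apply: cvgM.
Qed.

End RealSequences.

Section SobolevWeight.
Variable R : realType.

Definition Hs_weight (s : R) m := (1 + lam_abs2 R m) `^ (2 * s).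

Lemma lam_abs2_ge0 m : 0 <= lam_abs2 R m.
Proof. by rewrite /lam_abs2; case: eqP. Qed.

Lemma Hs_weight_mono s m i : 0 <= s -> (m <= i)%N -> Hs_weight s m <= Hs_weight s i.
Proof.
move=> s0 mi; rewrite /Hs_weight ge0_ler_powR ?mulr_ge0 ?nnegrE
  ?addr_ge0 ?lam_abs2_ge0 // lerD2l /lam_abs2.
case: eqP => [_|/eqP m0]; first by case: eqP.
have i0 : i != 0%N by apply: contra m0 => /eqP i0; move: mi; rewrite i0 leqn0.
by rewrite (negbTE i0) ler_nat leq_exp2l.
Qed.

Lemma Hs_weight_ge1 s m : 0 <= s -> 1 <= Hs_weight s m.
Proof.
move=> s0; apply: le_trans (Hs_weight_mono s0 (leq0n m)).
by rewrite /Hs_weight /lam_abs2 /= addr0 powR1.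
Qed.

Lemma Hs_weight_gt0 s m : 0 <= s -> 0 < Hs_weight s m.
Proof. by move=> s0; apply: lt_le_trans ltr01 (Hs_weight_ge1 m s0). Qed.

End SobolevWeight.

Section DyadicTree.
Variable R : realType.
Variables (r p : nat -> nat -> R).
Hypothesis r_gt0 : forall n k : nat, (1 <= n)%N -> (k < 2 ^ n)%N -> 0 < r n k.

Definition ptilde n b := p n (b %% 2 ^ n)%N.

Definition ptilde_incr i b :=
  ptilde i b - (if i is i'.+1 then ptilde i' b else 0).

(* Level 0 accounts for the root term |p(x_0^0)|^2 of the H^1 norm,
   with unit weight. *)
Definition level_maxres i := if i is 0 then 1 else maxres r i.
Definition level_energy i := if i is 0 then p 0 0 ^+ 2 else edge_energy r p i.

Definition level_const (s : R) i :=
  Hs_weight s i * (2 ^ i)%:R^-1 * level_maxres i.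

Lemma ptilde_periodic n : dyadic_periodic n (ptilde n).
Proof. by move=> b; rewrite /ptilde modn_mod. Qed.

Lemma ptilde_incr_periodic i : dyadic_periodic i (ptilde_incr i).
Proof.
move=> b; rewrite /ptilde_incr /ptilde modn_mod; case: i => [|i] //=.
by rewrite (modn_dvdm _ (dvdn_exp2l _ (leqnSn i))).
Qed.

Lemma ptilde_sum_incr n b : ptilde n b = \sum_(i < n.+1) ptilde_incr i b.
Proof.
elim: n => [|n IH]; first by rewrite big_ord1 /ptilde_incr subr0.
by rewrite big_ord_recr /= -IH /ptilde_incr addrC subrK.
Qed.

Lemma fourier_fcoef n m j L : (maxn n m <= L)%N ->
  fourier_re n (p n) m j = fcoef_re L (ptilde n) m j /\
  fourier_im n (p n) m j = fcoef_im L (ptilde n) m j.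
Proof.
move=> nmL; have [-> ->] := fcoef_periodic j (leq_maxr n m) nmL
  (dyadic_periodicW (leq_maxl n m) (ptilde_periodic n)).
by [].
Qed.

Lemma level_maxres_gt0 i : 0 < level_maxres i.
Proof.
case: i => [|i] //=; have h0 : (0 < 2 ^ i.+1)%N by rewrite expn_gt0.
apply: lt_le_trans (r_gt0 (n := i.+1) _ h0) _ => //.
exact: (le_bigmax _ (fun k : 'I_(2 ^ i.+1) => r i.+1 k) (Ordinal h0)).
Qed.

Lemma level_energy_ge0 i : 0 <= level_energy i.
Proof.
case: i => [|i] /=; first exact: sqr_ge0.
by apply: sumr_ge0 => k _; rewrite divr_ge0 ?sqr_ge0 // ltW ?r_gt0.
Qed.

Lemma level_const_gt0 s i : 0 <= s -> 0 < level_const s i.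
Proof.
by move=> s0; rewrite /level_const !mulr_gt0 ?Hs_weight_gt0 ?level_maxres_gt0
  ?invr_gt0 ?ltr0n ?expn_gt0.
Qed.

Lemma ptilde_incr_L2_le i : step_integral i (fun b => ptilde_incr i b ^+ 2)
  <= (2 ^ i)%:R^-1 * level_maxres i * level_energy i.
Proof.
case: i => [|i].
  by rewrite /step_integral /ptilde_incr /ptilde !big_ord1 /= expn0 invr1 !mul1r subr0.
rewrite /step_integral -mulrA ler_wpM2l ?invr_ge0 ?ler0n //= mulr_sumr.
apply: ler_sum => b _; rewrite /ptilde_incr /ptilde modn_small //=.
have rb : 0 < r i.+1 b by apply: r_gt0.
have rM : r i.+1 b <= maxres r i.+1.
  exact: (le_bigmax _ (fun k : 'I_(2 ^ i.+1) => r i.+1 k) b).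
set d := (_ - _) ^+ 2; have d0 : 0 <= d by apply: sqr_ge0.
rewrite mulrC; apply: (le_trans (y := d / r i.+1 b * r i.+1 b)).
  by rewrite divfK ?gt_eqF.
by rewrite ler_wpM2l // divr_ge0 // ltW.
Qed.

(* Beyond its own level the increment has no Fourier mass, and below it the
   weight is at most Hs_weight s i. *)
Lemma ptilde_incr_Hs_partial_le s i L K : 0 <= s -> (i <= L)%N -> (K <= L.+1)%N ->
  \sum_(m < K) \sum_(j < 2 ^ m | lam_index m j) Hs_weight s m *
     (fcoef_re L (ptilde_incr i) m j ^+ 2 + fcoef_im L (ptilde_incr i) m j ^+ 2)
  <= level_const s i * level_energy i.
Proof.
move=> s0 iL KL.
pose G m := \sum_(j < 2 ^ m | lam_index m j)
  (fcoef_re L (ptilde_incr i) m j ^+ 2 + fcoef_im L (ptilde_incr i) m j ^+ 2).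
have G0 m : 0 <= G m by apply: sumr_ge0 => j _; rewrite addr_ge0 ?sqr_ge0.
have W0 := ltW (Hs_weight_gt0 i s0).
apply: (le_trans (y := \sum_(m < K) Hs_weight s i * G m)).
  apply: ler_sum => m _; rewrite /G mulr_sumr; apply: ler_sum => j lj.
  have [mi|im] := leqP m i.
    by rewrite ler_wpM2r ?addr_ge0 ?sqr_ge0 ?Hs_weight_mono.
  have mL : (m <= L)%N by rewrite -ltnS (leq_trans (ltn_ord m)).
  have [-> ->] := fcoef_high_eq0 (ptilde_incr_periodic i) im mL lj.
  by rewrite expr0n /= addr0 !mulr0.
apply: (le_trans (y := \sum_(m < L.+1) Hs_weight s i * G m)).
  by apply: (ler_sum_ord_mono (f := fun m => Hs_weight s i * G m)) => // m; rewrite mulr_ge0.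
rewrite -mulr_sumr /G fcoef_parseval.
rewrite (step_integral_periodic iL); last by move=> b; rewrite ptilde_incr_periodic.
by rewrite /level_const -!mulrA ler_wpM2l // mulrA ptilde_incr_L2_le.
Qed.

Lemma fourier_ptilde_sqr_le s n m j L : 0 <= s -> (maxn n m <= L)%N ->
  fourier_re n (p n) m j ^+ 2 + fourier_im n (p n) m j ^+ 2 <=
  (\sum_(i < n.+1) level_const s i) * \sum_(i < n.+1)
    (fcoef_re L (ptilde_incr i) m j ^+ 2 + fcoef_im L (ptilde_incr i) m j ^+ 2)
      / level_const s i.
Proof.
move=> s0 nmL; have c0 i := level_const_gt0 i s0.
have [-> ->] := fourier_fcoef j nmL.
have -> : ptilde n = (fun b => \sum_(i < n.+1) ptilde_incr i b).
  by apply: funext => b; apply: ptilde_sum_incr.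
have [-> ->] := fcoef_sum L n.+1 ptilde_incr m j.
rewrite [X in _ <= _ * X](eq_bigr _ (fun i _ => mulrDl _ _ _)) big_split mulrDr.
by apply: lerD; [
  exact: (weighted_cauchy_schwarz _ (fun i => fcoef_re L (ptilde_incr i) m j) c0) |
  exact: (weighted_cauchy_schwarz _ (fun i => fcoef_im L (ptilde_incr i) m j) c0)].
Qed.

Lemma ptilde_Hs_partial_le s n K : 0 <= s ->
  \sum_(m < K) \sum_(j < 2 ^ m | lam_index m j)
     Hs_weight s m * (fourier_re n (p n) m j ^+ 2 + fourier_im n (p n) m j ^+ 2)
  <= (\sum_(i < n.+1) level_const s i) * \sum_(i < n.+1) level_energy i.
Proof.
move=> s0; set L := maxn n K; set C := \sum_(i < n.+1) level_const s i.
have c0 i := level_const_gt0 i s0.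
have C0 : 0 <= C by apply: sumr_ge0 => i _; apply: ltW.
pose G i m j := Hs_weight s m *
  (fcoef_re L (ptilde_incr i) m j ^+ 2 + fcoef_im L (ptilde_incr i) m j ^+ 2).
apply: (le_trans (y := \sum_(m < K) \sum_(j < 2 ^ m | lam_index m j)
    C * \sum_(i < n.+1) (level_const s i)^-1 * G i m j)).
  apply: ler_sum => m _; apply: ler_sum => j _.
  have mL : (maxn n m <= L)%N.
    by rewrite geq_max leq_maxl (leq_trans (ltnW (ltn_ord m))) ?leq_maxr.
  have -> : C * \sum_(i < n.+1) (level_const s i)^-1 * G i m j =
      Hs_weight s m * (C * \sum_(i < n.+1) (fcoef_re L (ptilde_incr i) m j ^+ 2
        + fcoef_im L (ptilde_incr i) m j ^+ 2) / level_const s i).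
    rewrite [RHS]mulrCA [in RHS]mulr_sumr; congr (_ * _).
    by apply: eq_bigr => i _; rewrite /G; ring.
  by rewrite ler_wpM2l ?fourier_ptilde_sqr_le // ltW ?Hs_weight_gt0.
rewrite (eq_bigr (fun m : 'I_K => C * \sum_(i < n.+1) (level_const s i)^-1 *
    \sum_(j < 2 ^ m | lam_index m j) G i m j)); last first.
  move=> m _; rewrite -mulr_sumr exchange_big /=; congr (_ * _).
  by apply: eq_bigr => i _; rewrite mulr_sumr.
rewrite -mulr_sumr ler_wpM2l // exchange_big /=; apply: ler_sum => i _.
rewrite -mulr_sumr ler_pdivrMl //; apply: ptilde_incr_Hs_partial_le => //.
  by rewrite /L (leq_trans _ (leq_maxl n K)) // -ltnS.
by rewrite /L (leq_trans (leq_maxr n K)).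
Qed.

Lemma ptilde_incr_L2_le_energy s i L : 0 <= s -> (i <= L)%N ->
  step_integral L (fun b => ptilde_incr i b ^+ 2 / level_const s i)
  <= level_energy i.
Proof.
move=> s0 iL; have c0 := level_const_gt0 i s0.
rewrite (step_integral_periodic iL); last by move=> b; rewrite ptilde_incr_periodic.
rewrite (_ : (fun b => _) = (fun b => (level_const s i)^-1 * ptilde_incr i b ^+ 2));
  last by apply: funext => b; rewrite mulrC.
rewrite step_integralZ ler_pdivrMl //; apply: le_trans (ptilde_incr_L2_le i) _.
have W1 := Hs_weight_ge1 i s0.
have E0 := level_energy_ge0 i; have M0 := ltW (level_maxres_gt0 i).
have t0 : 0 <= (2 ^ i)%:R^-1 :> R by rewrite invr_ge0 ler0n.
by rewrite /level_const -!mulrA ler_peMl // !mulr_ge0.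
Qed.

Lemma ptilde_L2dist_le s n d L : 0 <= s -> (n + d <= L)%N ->
  step_integral L (fun b => (ptilde (n + d) b - ptilde n b) ^+ 2) <=
  (\sum_(k < d) level_const s (k + n.+1)) * \sum_(k < d) level_energy (k + n.+1).
Proof.
move=> s0 ndL; set C := \sum_(k < d) level_const s (k + n.+1).
have c0 k := level_const_gt0 (k + n.+1) s0.
have diffE b : ptilde (n + d) b - ptilde n b = \sum_(k < d) ptilde_incr (k + n.+1) b.
  by rewrite (sum_ord_shift (fun i => ptilde_incr i b)) !ptilde_sum_incr addSn.
apply: (le_trans (ler_step_integral L (g := fun b => C *
  \sum_(k < d) ptilde_incr (k + n.+1) b ^+ 2 / level_const s (k + n.+1)) _)).
  move=> b; rewrite diffE.
  exact: (weighted_cauchy_schwarz _ (fun k => ptilde_incr (k + n.+1) b) c0).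
have C0 : 0 <= C by apply: sumr_ge0 => k _; apply: ltW.
rewrite step_integralZ ler_wpM2l //.
rewrite (step_integral_sum L d (fun k b =>
  ptilde_incr (k + n.+1) b ^+ 2 / level_const s (k + n.+1))).
apply: ler_sum => k _; apply: ptilde_incr_L2_le_energy => //.
by rewrite (leq_trans _ ndL) // addnC addSn ltn_add2l.
Qed.

(* (1 + 2^i)^(2s) <= (2^(i+1))^(2s) = 2^(2s) 2^(2is). *)
Lemma level_const_le s i : 0 <= s -> (0 < i)%N ->
  level_const s i <= 2 `^ (2 * s) * (maxres r i / 2 `^ (i%:R * (1 - 2 * s))).
Proof.
case: i => // i s0 _; set t := 2 * s.
have t0 : 0 <= t by rewrite /t mulr_ge0.
rewrite /level_const /Hs_weight /level_maxres /lam_abs2 -/t /=.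
set N : R := (2 ^ i.+1)%:R.
have N1 : 1 <= N by rewrite /N ler1n expn_gt0.
have NE : N = 2 `^ (i.+1)%:R by rewrite /N powR_mulrn // natrX.
have h1 : (1 + N) `^ t <= (N * 2) `^ t by apply: ge0_ler_powR; rewrite ?nnegrE; lra.
have h2 : (N * 2) `^ t = 2 `^ ((i.+1)%:R * t) * 2 `^ t.
  by rewrite powRM ?NE -?powRrM //; lra.
have h3 : 2 `^ ((i.+1)%:R * (1 - t)) = N / 2 `^ ((i.+1)%:R * t).
  by rewrite mulrBr mulr1 powRB ?NE //; apply/implyP => _; rewrite pnatr_eq0.
have p1 : 0 < 2 `^ ((i.+1)%:R * t) :> R by apply: powR_gt0.
have p2 : 0 < 2 `^ t :> R by apply: powR_gt0.
have M0 : 0 < maxres r i.+1 by apply: (level_maxres_gt0 i.+1).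
rewrite h3; apply: (le_trans (y := (N * 2) `^ t * N^-1 * maxres r i.+1)).
  by rewrite ler_wpM2r ?(ltW M0) // ler_wpM2r // invr_ge0; lra.
by rewrite h2 le_eqVlt; apply/orP; left; apply/eqP; field; rewrite !gt_eqF //; lra.
Qed.

Lemma level_const_sum_le s B : 0 <= s ->
  (forall N, \sum_(1 <= i < N) maxres r i / 2 `^ (i%:R * (1 - 2 * s)) <= B) ->
  forall N, \sum_(i < N) level_const s i <= 1 + 2 `^ (2 * s) * B.
Proof.
move=> s0 hB N.
have B0 : 0 <= B by have := hB 0%N; rewrite big_geq.
have pt : 0 <= 2 `^ (2 * s) :> R by apply: powR_ge0.
case: N => [|N]; first by rewrite big_ord0 addr_ge0 // mulr_ge0.
rewrite big_ord_recl /=.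
have -> : level_const s 0 = 1.
  by rewrite /level_const /Hs_weight /lam_abs2 /= addr0 powR1 expn0 invr1 !mulr1.
rewrite lerD2l; apply: (le_trans (y := \sum_(i < N) 2 `^ (2 * s) *
   (maxres r i.+1 / 2 `^ (i.+1%:R * (1 - 2 * s))))).
  by apply: ler_sum => i _; apply: level_const_le.
rewrite -mulr_sumr ler_wpM2l //; apply: le_trans (hB N.+1).
by rewrite big_add1 /= big_mkord.
Qed.

Lemma edge_energy_ge0 n : (1 <= n)%N -> 0 <= edge_energy r p n.
Proof. by case: n => // n _; apply: (level_energy_ge0 n.+1). Qed.

Lemma L2dist2C n m : L2dist2 p n m = L2dist2 p m n.
Proof.
rewrite /L2dist2 maxnC; congr step_integral; apply: funext => b.
by rewrite -sqrrN opprB.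
Qed.

Lemma L2dist2_ptilde n d : L2dist2 p n (n + d) =
  step_integral (n + d) (fun b => (ptilde (n + d) b - ptilde n b) ^+ 2).
Proof.
rewrite /L2dist2 (maxn_idPr (leq_addr _ _)); congr step_integral.
by apply: funext => b; rewrite -sqrrN opprB.
Qed.

Section Trace.
Variables (s C : R).
Hypothesis s_ge0 : 0 <= s.
Hypothesis level_const_sum_bounded : forall N, \sum_(i < N) level_const s i <= C.
Hypothesis p_H1 : (H1semi2 r p < +oo)%E.

Let H1val := p 0 0 ^+ 2 + fine (H1semi2 r p).

Lemma H1semi2_ge0 : (0 <= H1semi2 r p)%E.
Proof. by apply: nneseries_ge0 => n n1 _; rewrite lee_fin edge_energy_ge0. Qed.

Lemma H1norm2E : H1norm2 r p = H1val%:E.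
Proof.
have H1fin : H1semi2 r p \is a fin_num by rewrite ge0_fin_numE ?H1semi2_ge0.
by rewrite /H1norm2 -(fineK H1fin) -EFinD.
Qed.

Lemma H1val_ge0 : 0 <= H1val.
Proof. by rewrite addr_ge0 ?sqr_ge0 ?fine_ge0 ?H1semi2_ge0. Qed.

Lemma level_energy_sum_le N : \sum_(i < N) level_energy i <= H1val.
Proof.
case: N => [|N]; first by rewrite big_ord0 H1val_ge0.
rewrite big_ord_recl lerD2l.
apply: le_trans (nneseries_partial_le edge_energy_ge0 p_H1 N.+1).
by rewrite big_add1 /= big_mkord.
Qed.

Lemma level_energy_tail_le a d : \sum_(k < d) level_energy (k + a) <= H1val.
Proof.
rewrite sum_ord_shift; apply: le_trans (level_energy_sum_le (a + d)).
by rewrite lerBlDr lerDl sumr_ge0 // => i _; apply: level_energy_ge0.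
Qed.

Lemma ptilde_L2_tail_lt e : 0 < e -> exists N, forall n d L,
  (N <= n)%N -> (n + d <= L)%N ->
  step_integral L (fun b => (ptilde (n + d) b - ptilde n b) ^+ 2) < e.
Proof.
move=> e0; have H1pos : 0 < H1val + 1 by rewrite ltr_wpDl ?H1val_ge0.
have c0 i := ltW (level_const_gt0 i s_ge0).
have [N HN] := sum_tail_lt c0 level_const_sum_bounded (divr_gt0 e0 H1pos).
exists N => n d L Nn ndL; apply: le_lt_trans (ptilde_L2dist_le s_ge0 ndL) _.
have X0 : 0 <= \sum_(k < d) level_const s (k + n.+1) by apply: sumr_ge0.
have := HN n.+1 d (leqW Nn); rewrite ltr_pdivlMr // => Xlt.
have := level_energy_tail_le n.+1 d; nra.
Qed.

Lemma L2_cauchy_ptilde : L2_cauchy p.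
Proof.
move=> e e0; have [N HN] := ptilde_L2_tail_lt e0; exists N => n m Nn Nm.
wlog nm : n m Nn Nm / (n <= m)%N.
  move=> H; case: (leqP n m) => [|/ltnW] nm; first exact: H.
  by rewrite L2dist2C; apply: H.
by rewrite -(subnKC nm) L2dist2_ptilde; apply: HN.
Qed.

Lemma fourier_cauchy m j : lam_index m j -> forall e, 0 < e ->
  exists N, forall n n', (N <= n)%N -> (N <= n')%N ->
    `|fourier_re n (p n) m j - fourier_re n' (p n') m j| < e /\
    `|fourier_im n (p n) m j - fourier_im n' (p n') m j| < e.
Proof.
move=> lj e e0; have [N HN] := ptilde_L2_tail_lt (exprn_gt0 2 e0).
exists N => n n' Nn Nn'.
wlog nn : n n' Nn Nn' / (n <= n')%N.
  move=> H; case: (leqP n n') => [|/ltnW] nn; first exact: H.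
  by rewrite distrC [X in _ /\ X < _]distrC; apply: H.
rewrite -(subnKC nn); set d := (n' - n)%N; set L := maxn (n + d) m.
have nmL : (maxn n m <= L)%N.
  by rewrite geq_max leq_maxr (leq_trans (leq_addr d n)) ?leq_maxl.
have ndmL : (maxn (n + d) m <= L)%N by [].
have [-> ->] := fourier_fcoef j nmL; have [-> ->] := fourier_fcoef j ndmL.
rewrite distrC [X in _ /\ X < _]distrC.
have [<- <-] := fcoefB L (ptilde (n + d)) (ptilde n) m j.
have bessel := fcoef_bessel (fun b => ptilde (n + d) b - ptilde n b)
  (leq_maxr (n + d) m) lj.
have tail := HN n d L Nn (leq_maxl _ _).
have sqr_lt x : x ^+ 2 < e ^+ 2 -> `|x| < e.
  by move=> ?; rewrite ltr_norml; apply/andP; split; nra.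
split; apply: sqr_lt; apply: le_lt_trans tail; apply: le_trans bessel.
  by rewrite lerDl sqr_ge0.
by rewrite lerDr sqr_ge0.
Qed.

Lemma cvgn_fourier m j : lam_index m j ->
  cvgn (fun n => fourier_re n (p n) m j) /\ cvgn (fun n => fourier_im n (p n) m j).
Proof.
move=> lj; split; apply: cvgn_cauchy => e e0; have [N HN] := fourier_cauchy lj e0.
  by exists N => n n' Nn Nn'; case: (HN n n' Nn Nn').
by exists N => n n' Nn Nn'; case: (HN n n' Nn Nn').
Qed.

Lemma gamma0_Hs_partial_le K :
  \sum_(m < K) \sum_(j < 2 ^ m | lam_index m j)
    Hs_weight s m * (gamma0_re p m j ^+ 2 + gamma0_im p m j ^+ 2) <= C * H1val.
Proof.
pose f n := \sum_(m < K) \sum_(j < 2 ^ m | lam_index m j)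
  Hs_weight s m * (fourier_re n (p n) m j ^+ 2 + fourier_im n (p n) m j ^+ 2).
have f_le n : f n <= C * H1val.
  apply: le_trans (ptilde_Hs_partial_le n K s_ge0) _.
  apply: ler_pM; rewrite ?level_energy_sum_le ?level_const_sum_bounded //.
    by apply: sumr_ge0 => i _; apply: ltW; apply: level_const_gt0.
  by apply: sumr_ge0 => i _; apply: level_energy_ge0.
have f_cvg : (f n @[n --> \oo] --> \sum_(m < K) \sum_(j < 2 ^ m | lam_index m j)
    Hs_weight s m * (gamma0_re p m j ^+ 2 + gamma0_im p m j ^+ 2))%classic.
  apply: cvg_big => //; first exact: add_continuous.
  move=> m _; apply: cvg_big => //; first exact: add_continuous.
  by move=> j lj; have [] := cvgn_fourier lj; apply: cvgn_weighted_sqr_sum.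
rewrite -(cvg_lim _ f_cvg) //; apply: limr_le; last exact: nearW.
by apply/cvg_ex; exists (\sum_(m < K) \sum_(j < 2 ^ m | lam_index m j)
  Hs_weight s m * (gamma0_re p m j ^+ 2 + gamma0_im p m j ^+ 2)).
Qed.

Lemma Hs_norm2_gamma0_le :
  (Hs_norm2 s (gamma0_re p) (gamma0_im p) <= C%:E * H1norm2 r p)%E.
Proof.
rewrite H1norm2E -EFinM /Hs_norm2; apply: lime_le.
  apply: is_cvg_nneseries => m _ _; rewrite lee_fin; apply: sumr_ge0 => j _.
  by rewrite mulr_ge0 ?powR_ge0 // addr_ge0 ?sqr_ge0.
by apply: nearW => K; rewrite sumEFin lee_fin big_mkord; apply: gamma0_Hs_partial_le.
Qed.

Lemma Hs_norm2_gamma0_lt : (Hs_norm2 s (gamma0_re p) (gamma0_im p) < +oo)%E.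
Proof. by apply: le_lt_trans Hs_norm2_gamma0_le _; rewrite H1norm2E -EFinM ltry. Qed.

End Trace.

End DyadicTree.

Unset Implicit Arguments.

Theorem proposition3p1 (R : realType) (r : nat -> nat -> R) (s : R)
  (hr : forall n k : nat, (1 <= n)%N -> (k < 2 ^ n)%N -> 0 < r n k)
  (hs : 0 < s)
  (hsum : (\sum_(1 <= n <oo)
             (maxres r n / 2 `^ (n%:R * (1 - 2 * s)))%:E < +oo)%E) :
  exists C : R, 0 < C /\
    forall p : nat -> nat -> R, (H1semi2 r p < +oo)%E ->
      [/\ L2_cauchy p,
          (forall m j : nat, lam_index m j ->
             cvgn (fun n => fourier_re n (p n) m j) /\
             cvgn (fun n => fourier_im n (p n) m j)),
          (Hs_norm2 s (gamma0_re p) (gamma0_im p) < +oo)%E &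
          (Hs_norm2 s (gamma0_re p) (gamma0_im p)
             <= (C ^+ 2)%:E * H1norm2 r p)%E].
Proof.
have s_ge0 : 0 <= s := ltW hs.
pose a n := maxres r n / 2 `^ (n%:R * (1 - 2 * s)).
have a_ge0 n : (1 <= n)%N -> 0 <= a n.
  by case: n => // n _; rewrite divr_ge0 ?powR_ge0 // ltW ?(level_maxres_gt0 hr n.+1).
have a_partial_le := nneseries_partial_le a_ge0 hsum.
set B := fine _ in a_partial_le.
have B_ge0 : 0 <= B by have := a_partial_le 0%N; rewrite big_geq.
have level_const_bounded := level_const_sum_le hr s_ge0 a_partial_le.
set C := 1 + 2 `^ (2 * s) * B in level_const_bounded.
have C_gt0 : 0 < C by rewrite ltr_wpDr // mulr_ge0 ?powR_ge0.
exists (Num.sqrt C); split; first by rewrite sqrtr_gt0.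
move=> p p_H1; rewrite sqr_sqrtr; last exact: ltW.
split.
- exact: (L2_cauchy_ptilde hr s_ge0 level_const_bounded p_H1).
- exact: (cvgn_fourier hr s_ge0 level_const_bounded p_H1).
- exact: (Hs_norm2_gamma0_lt hr s_ge0 level_const_bounded p_H1).
- exact: (Hs_norm2_gamma0_le hr s_ge0 level_const_bounded p_H1).
Qed.
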